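(* Let $S$ be the three-vertex tree with root $a$, whose right child is $b$, where $b$ has a left child $c$ (preorder $132$), and let $S'$ be the three-vertex tree with a root having both a left child and a right child (preorder $213$); all edges of $S$ and $S'$ are contiguous. Let $(P,e)$ be any tree pattern. Let $Q$ be obtained from $S$ by attaching $(P,e)$ as the left subtree of the root $a$ via a non-contiguous edge, and let $Q'$ be obtained from $S'$ by attaching $(P,e)$ as the left subtree of the right leaf of $S'$ via a non-contiguous edge. Then $Q$ and $Q'$ are Wilf-equivalent.
   Context: $\mathcal{T}_n$ is the set of binary trees on $n$ vertices labeled $1,\dots,n$ by the search tree property (labels of combined trees reassigned by this property). $c_L,c_R,p$: left child, right child, parent. A tree pattern is $(P,e)$, $P\in\mathcal{T}_k$, $e\colon[k]\setminus\{\text{root}\}\to\{0,1\}$; edge $(i,p(i))$ is contiguous if $e(i)=1$, non-contiguous if $e(i)=0$. $T\in\mathcal{T}_n$ contains $(P,e)$ if there is an injection $f\colon[k]\to[n]$ such that for every non-root $i$ of $P$: if $e(i)=1$, $f(i)$ is the left (resp. right) child of $f(p(i))$ when $i$ is the left (resp. right) child of $p(i)$; if $e(i)=0$, $f(i)$ lies in the left (resp. right) subtree of $f(p(i))$. $\mathcal{T}_n(Q)$ is the set of avoiders of $Q$. $Q,Q'$ are Wilf-equivalent if $|\mathcal{T}_n(Q)|=|\mathcal{T}_n(Q')|$ for all $n\ge0$. *)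

From mathcomp Require Import all_boot.
From mathcomp Require Import boolp.

Set Implicit Arguments.
Unset Strict Implicit.
Unset Printing Implicit Defensive.

(* A tree with n vertices carries a unique labeling
   by 1..n satisfying the search-tree property (in-order), so T_n is in
   bijection with the shapes of size n.  Vertices are addressed by their path
   from the root: a seq bool, false = go to left child, true = right child. *)
Inductive btree := BLeaf | BNode of btree & btree.

Fixpoint bsize (t : btree) : nat :=
  if t is BNode l r then (bsize l + bsize r).+1 else 0.

Fixpoint bpos (t : btree) (p : seq bool) : bool :=
  match t, p with
  | BLeaf, _ => false
  | BNode _ _, [::] => true
  | BNode l _, false :: q => bpos l q
  | BNode _ r, true :: q => bpos r q
  end.

(* Tree patterns: each vertex carries the bit e of the edge to its parent
   (true = contiguous, false = non-contiguous); the bit at the root is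
   irrelevant. *)
Inductive ptree := PLeaf | PNode of bool & ptree & ptree.

Fixpoint psub (P : ptree) (p : seq bool) : ptree :=
  match p, P with
  | [::], _ => P
  | _, PLeaf => PLeaf
  | false :: q, PNode _ l _ => psub l q
  | true :: q, PNode _ _ r => psub r q
  end.

Definition ppos (P : ptree) (p : seq bool) : bool :=
  if psub P p is PNode _ _ _ then true else false.

Definition pedge (P : ptree) (p : seq bool) : bool :=
  if psub P p is PNode e _ _ then e else false.

Definition contains (P : ptree) (T : btree) : Prop :=
  exists f : seq bool -> seq bool,
    [/\ (forall p, ppos P p -> bpos T (f p)),
        (forall p q, ppos P p -> ppos P q -> f p = f q -> p = q) &
        (forall p d, ppos P (rcons p d) ->
           (pedge P (rcons p d) -> f (rcons p d) = rcons (f p) d) /\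
           (~~ pedge P (rcons p d) -> exists s, f (rcons p d) = f p ++ d :: s))].

(* All trees of height <= h, each exactly once. *)
Fixpoint trees_upto (h : nat) : seq btree :=
  if h is h'.+1 then
    BLeaf :: [seq BNode lr.1 lr.2 | lr <- [seq (l, r) | l <- trees_upto h', r <- trees_upto h']]
  else [:: BLeaf].

(* |T_n(Q)| : trees of size n (all have height <= n) avoiding Q. *)
Definition num_avoiders (Q : ptree) (n : nat) : nat :=
  count (fun t => (bsize t == n) && `[< ~ contains Q t >]) (trees_upto n).

Definition wilf_equiv (Q Q' : ptree) : Prop :=
  forall n, num_avoiders Q n = num_avoiders Q' n.

(* (P,e) with the edge from its root to the new parent made non-contiguous *)
Definition attach_nc (P : ptree) : ptree :=
  if P is PNode _ l r then PNode false l r else PLeaf.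

(* Q : S = root a, right child b (contiguous), b has left child c
   (contiguous) [preorder 132]; (P,e) attached as left subtree of a,
   non-contiguously. *)
Definition Q132 (P : ptree) : ptree :=
  PNode false (attach_nc P) (PNode true (PNode true PLeaf PLeaf) PLeaf).

(* Q' : S' = root with left and right leaf children (contiguous)
   [preorder 213]; (P,e) attached as left subtree of the right leaf,
   non-contiguously. *)
Definition Q213 (P : ptree) : ptree :=
  PNode false (PNode true PLeaf PLeaf) (PNode true (attach_nc P) PLeaf).

From HB Require Import structures.
From mathcomp Require Import all_boot all_algebra boolp ring zify.

(* Containment is decidable: a pattern is contained in a tree iff it matches at
   the root of some subtree, a contiguous edge leading to the corresponding child
   and a non-contiguous one to any subtree of that child.

   For Q = Q132 P and for Q = Q213 P, a match of Q at the root of a tree with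
   subtrees L and R is a condition [u L && v R]. Hence the generating function A
   of the Q-avoiders satisfies A = 1 + X (A^2 - U V), where U and V count the
   avoiders satisfying u, resp. v. Let C count the P-avoiders. For Q132,
   U = A - C and V = A - 1 - X A; for Q213, U = A - 1 and V = G where
   G = X (A - C) (A - G). Eliminating V, resp. G, yields in both cases
   A - 1 - X (A + (A - 1) C) - X^2 A (A - C) = 0, and this equation determines A
   from C: the difference of two solutions is (A - A') (1 + X w) for some w.
   Generating functions are truncated at X^N, so these are congruences. *)

Set Implicit Arguments.
Unset Strict Implicit.
Unset Printing Implicit Defensive.

Import GRing.Theory Num.Theory.

Definition isnode (t : btree) : bool := if t is BNode _ _ then true else false.

Fixpoint subtree (t : btree) (p : seq bool) {struct p} : btree :=
  if p is d :: q then
    (if t is BNode l r then subtree (if d then r else l) q else BLeaf)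
  else t.

Lemma subtree_cat t p q : subtree t (p ++ q) = subtree (subtree t p) q.
Proof.
by elim: p t => [|[] p IHp] [|l r] //=; case: q IHp => [|[] q].
Qed.

Lemma bpos_subtree t p : bpos t p = isnode (subtree t p).
Proof. by elim: p t => [|[] p IHp] [|l r] //=. Qed.

Fixpoint has_subtree (m : pred btree) (t : btree) : bool :=
  m t || if t is BNode l r then has_subtree m l || has_subtree m r else false.

Lemma has_subtreeP (m : pred btree) t : reflect (exists p, m (subtree t p)) (has_subtree m t).
Proof.
apply: (iffP idP).
  elim: t => [|l IHl r IHr] /=; first by rewrite orbF => mt; exists [::].
  case/orP => [mt|/orP [/IHl [p mp]|/IHr [p mp]]].
  - by exists [::].
  - by exists (false :: p).
  - by exists (true :: p).
case=> p; elim: p t => [|[] p IHp] [|l r] /= mp;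
  by rewrite ?mp ?(IHp _ mp) ?orbT.
Qed.

Definition child_match (m : pred btree) (c : ptree) (t : btree) : bool :=
  if c is PNode e _ _ then (if e then m t else has_subtree m t) else true.

Fixpoint pmatch (P : ptree) (t : btree) : bool :=
  match P, t with
  | PLeaf, _ => true
  | PNode _ _ _, BLeaf => false
  | PNode _ l r, BNode tl tr => child_match (pmatch l) l tl && child_match (pmatch r) r tr
  end.

Definition occurs (P : ptree) : pred btree := has_subtree (pmatch P).

Definition embedding (P : ptree) (T : btree) (f : seq bool -> seq bool) : Prop :=
  [/\ (forall p, ppos P p -> bpos T (f p)),
      (forall p q, ppos P p -> ppos P q -> f p = f q -> p = q) &
      (forall p d, ppos P (rcons p d) ->
         (pedge P (rcons p d) -> f (rcons p d) = rcons (f p) d) /\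
         (~~ pedge P (rcons p d) -> exists s, f (rcons p d) = f p ++ d :: s))].

Lemma ppos_leaf p : ppos PLeaf p = false.
Proof. by case: p => [|[] p]. Qed.

Lemma embedding_leaf T f : embedding PLeaf T f.
Proof. by split=> [p|p q|p d]; rewrite ppos_leaf. Qed.

Lemma embedding_shift P T p f :
  embedding P (subtree T p) f -> embedding P T (fun q => p ++ f q).
Proof.
case=> pos inj edge; split.
- by move=> q /pos; rewrite !bpos_subtree subtree_cat.
- by move=> q q' Pq Pq' /eqP; rewrite eqseq_cat // eqxx => /eqP; apply: inj.
- move=> q d /edge [cont ncont]; split=> [/cont ->|/ncont [s ->]].
    by rewrite rcons_cat.
  by exists s; rewrite catA.
Qed.

Lemma embedding_child e l r T f (d : bool) :
  embedding (PNode e l r) T f -> embedding (if d then r else l) T (fun q => f (d :: q)).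
Proof.
case=> pos inj edge; split.
- by move=> p Pp; apply: pos; case: d Pp.
- by move=> p q Pp Pq /inj; case: d Pp Pq => Pp Pq E; case: (E Pp Pq).
- by move=> p d' Pp; have := edge (d :: p) d'; case: d Pp => Pp; apply.
Qed.

Lemma embedding_node e l r tl tr gl gr :
  embedding l tl gl -> embedding r tr gr ->
  (pedge l [::] -> gl [::] = [::]) -> (pedge r [::] -> gr [::] = [::]) ->
  embedding (PNode e l r) (BNode tl tr)
    (fun p => if p is d :: q then d :: (if d then gr q else gl q) else [::]).
Proof.
move=> [posl injl edgel] [posr injr edger] rootl rootr; split.
- by case=> [|[] p] //=; [apply: posr | apply: posl].
- case=> [|[] p] [|[] q] //= Pp Pq [E]; congr (_ :: _); [exact: injr | exact: injl].
- case=> [|[] p] d /=.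
  + by case: d => _; split=> [?|_]; [rewrite rootr | eexists | rewrite rootl | eexists].
  + move=> /edger [cont ncont]; split=> [/cont -> // | /ncont [s ->]]; by exists s.
  + move=> /edgel [cont ncont]; split=> [/cont -> // | /ncont [s ->]]; by exists s.
Qed.

Lemma child_match_embedding c t :
  (forall T, pmatch c T -> exists2 f, embedding c T f & f [::] = [::]) ->
  child_match (pmatch c) c t -> exists2 g, embedding c t g & (pedge c [::] -> g [::] = [::]).
Proof.
case: c => [|[] l r] IHc /=.
- by exists id; first exact: embedding_leaf.
- by move=> /IHc [g emb_g g0]; exists g.
- case/has_subtreeP=> p /IHc [g emb_g _].
  by exists (fun q => p ++ g q) => //; apply: embedding_shift.
Qed.

Lemma pmatch_embedding P T : pmatch P T -> exists2 f, embedding P T f & f [::] = [::].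
Proof.
elim: P T => [|e l IHl r IHr] [|tl tr] //=; try by exists id; first exact: embedding_leaf.
case/andP=> /(child_match_embedding IHl) [gl emb_l rootl].
move=> /(child_match_embedding IHr) [gr emb_r rootr].
by eexists; [apply: embedding_node emb_l emb_r rootl rootr |].
Qed.

Lemma embedding_child_match c T (g : seq bool -> seq bool) x (d : bool) :
  pmatch c (subtree T (g [::])) ->
  (ppos c [::] -> (pedge c [::] -> g [::] = rcons x d) /\
                  (~~ pedge c [::] -> exists s, g [::] = x ++ d :: s)) ->
  child_match (pmatch c) c (subtree T (rcons x d)).
Proof.
case: c => [|[] l r] //= mc /(_ erefl) [cont ncont]; first by rewrite -cont.
have [s gE] := ncont erefl.
by apply/has_subtreeP; exists s; rewrite -subtree_cat cat_rcons -gE.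
Qed.

Lemma embedding_pmatch P T f : embedding P T f -> pmatch P (subtree T (f [::])).
Proof.
elim: P T f => [|e l IHl r IHr] T f //= emb.
have [pos _ edge] := emb.
have child d : child_match (pmatch (if d then r else l)) (if d then r else l)
                 (subtree T (rcons (f [::]) d)).
  have := embedding_child d emb.
  case: d (edge [::] d) => edge_d emb_d.
    exact: embedding_child_match (IHr _ _ emb_d) edge_d.
  exact: embedding_child_match (IHl _ _ emb_d) edge_d.
move: (pos [::] erefl) (child false) (child true).
rewrite bpos_subtree -!cats1 !subtree_cat.
by case: (subtree T (f [::])) => [|tl tr] //= _ -> ->.
Qed.

Lemma contains_occurs P T : contains P T <-> occurs P T.
Proof.
split=> [[f emb]|/has_subtreeP [p /pmatch_embedding [f emb _]]].
  by apply/has_subtreeP; exists (f [::]); apply: embedding_pmatch emb.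
by exists (fun q => p ++ f q); apply: embedding_shift.
Qed.

Lemma occurs_leaf Q : occurs Q BLeaf = pmatch Q BLeaf.
Proof. exact: orbF. Qed.

Lemma occurs_node Q L R :
  occurs Q (BNode L R) = [|| pmatch Q (BNode L R), occurs Q L | occurs Q R].
Proof. by []. Qed.

Lemma occurs_of_pmatch Q P t :
  (forall t, pmatch Q t -> occurs P t) -> occurs Q t -> occurs P t.
Proof.
move=> QP; elim: t => [|L IHL R IHR]; first by rewrite occurs_leaf; apply: QP.
by rewrite !occurs_node => /or3P [/QP // | /IHL | /IHR] ->; rewrite !orbT.
Qed.

Definition avoids (Q : ptree) (t : btree) : bool := ~~ occurs Q t.
Arguments avoids : simpl never.

Lemma avoids_leaf Q : avoids Q BLeaf = ~~ pmatch Q BLeaf.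
Proof. by rewrite /avoids occurs_leaf. Qed.

Lemma avoids_node Q L R :
  avoids Q (BNode L R) = [&& ~~ pmatch Q (BNode L R), avoids Q L & avoids Q R].
Proof. by rewrite /avoids occurs_node !negb_or. Qed.

Fixpoint eqbtree (t u : btree) : bool :=
  match t, u with
  | BLeaf, BLeaf => true
  | BNode l r, BNode l' r' => eqbtree l l' && eqbtree r r'
  | _, _ => false
  end.

Lemma eqbtreeP : Equality.axiom eqbtree.
Proof.
elim=> [|l IHl r IHr] [|l' r'] /=; try by constructor.
by apply: (iffP andP) => [[/IHl -> /IHr ->] | [<- <-]]; split; [apply/IHl | apply/IHr].
Qed.

HB.instance Definition _ := hasDecEq.Build btree eqbtreeP.

Fixpoint height (t : btree) : nat :=
  if t is BNode l r then (maxn (height l) (height r)).+1 else 0.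

Lemma height_bsize t : height t <= bsize t.
Proof. elim: t => [|l IHl r IHr] //=; rewrite ltnS geq_max; lia. Qed.

Lemma trees_uptoS h :
  trees_upto h.+1 = BLeaf :: [seq BNode lr.1 lr.2 | lr <- [seq (l, r) | l <- trees_upto h, r <- trees_upto h]].
Proof. by []. Qed.

Lemma BNode_uncurry_inj : injective (fun lr : btree * btree => BNode lr.1 lr.2).
Proof. by move=> [l r] [l' r'] [-> ->]. Qed.

Lemma mem_trees_upto h t : (t \in trees_upto h) = (height t <= h).
Proof.
elim: h t => [|h IHh] [|l r] //; rewrite trees_uptoS in_cons /=.
rewrite -[BNode l r]/((fun lr => BNode lr.1 lr.2) (l, r)) (mem_map BNode_uncurry_inj) ltnS geq_max -!IHh.
by apply/allpairsP/andP => [[[l' r'] /= [? ? [-> ->]]] | [? ?]]; last exists (l, r).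
Qed.

Lemma uniq_trees_upto h : uniq (trees_upto h).
Proof.
elim: h => [|h IHh] //; rewrite trees_uptoS /= (map_inj_uniq BNode_uncurry_inj).
rewrite allpairs_uniq // => [|[? ?] [? ?] _ _ [-> ->] //].
by rewrite andbT; apply/mapP => -[].
Qed.

Definition num_trees (x : pred btree) (n : nat) : nat :=
  count (fun t => (bsize t == n) && x t) (trees_upto n).

Lemma count_trees_upto h x n :
  n <= h -> count (fun t => (bsize t == n) && x t) (trees_upto h) = num_trees x n.
Proof.
move=> le_nh; rewrite /num_trees -!size_filter.
apply/perm_size/uniq_perm; rewrite ?filter_uniq ?uniq_trees_upto // => t.
rewrite !mem_filter !mem_trees_upto; case: eqP => //= size_t.
have := height_bsize t; rewrite size_t => le_tn.
by rewrite le_tn (leq_trans le_tn le_nh).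
Qed.

Lemma eq_num_trees x y : x =1 y -> num_trees x =1 num_trees y.
Proof. by move=> eq_xy n; apply: eq_count => t; rewrite eq_xy. Qed.

Lemma num_trees_split x u n :
  num_trees x n = num_trees (fun t => x t && u t) n + num_trees (fun t => x t && ~~ u t) n.
Proof.
rewrite /num_trees; elim: (trees_upto n) => //= t s ->.
by case: (bsize t == n); case: (x t); case: (u t) => /=; lia.
Qed.

Definition node_with (x y : pred btree) : pred btree :=
  fun t => if t is BNode l r then x l && y r else false.

Lemma count_sum T (a : pred T) s : count a s = \sum_(t <- s) a t.
Proof. by rewrite -sum1_count big_mkcond. Qed.

Lemma sum_indicator_add (n i j : nat) : \sum_(k < n.+1) ((i == k) * (j == n - k)) = (i + j == n).
Proof.
case: (leqP i n) => [le_in | lt_ni].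
  rewrite (bigD1 (Ordinal (le_in : i < n.+1))) //= eqxx big1 => [|k ne_ki].
    by rewrite mul1n addn0; apply/eqP/eqP; lia.
  rewrite (_ : (i == k) = false) // eq_sym.
  by apply: contraNF ne_ki => /eqP k_i; apply/eqP/val_inj.
rewrite big1 => [|k _]; last by rewrite (_ : (i == k) = false) //; have := ltn_ord k; lia.
by apply/esym/eqP; lia.
Qed.

Lemma num_trees_node_with x y n :
  num_trees (node_with x y) n.+1 = \sum_(k < n.+1) num_trees x k * num_trees y (n - k).
Proof.
set U := trees_upto n.
have num_trees_in_U z k : k <= n -> num_trees z k = \sum_(t <- U) ((bsize t == k) && z t).
  by move=> le_kn; rewrite -count_sum count_trees_upto.
rewrite (eq_bigr (fun k : 'I_n.+1 => \sum_(l <- U) \sum_(r <- U)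
           (((bsize l == k) && x l) * ((bsize r == n - k) && y r)))) => [|k _]; last first.
  have le_kn : k <= n := ltn_ord k.
  by rewrite !num_trees_in_U ?leq_subr // big_distrlr.
rewrite /num_trees trees_uptoS /= count_map count_sum big_allpairs [RHS]exchange_big.
apply: eq_bigr => l _; rewrite [RHS]exchange_big; apply: eq_bigr => r _ /=.
rewrite eqSS; case: (x l); case: (y r); rewrite ?andbT ?andbF.
all: under eq_bigr => k _ do rewrite ?andbT ?andbF ?muln0.
all: by rewrite ?sum_indicator_add ?big1_eq.
Qed.

Local Open Scope ring_scope.

Section TruncatedSeries.
Variable R : comNzRingType.
Implicit Types (p q : {poly R}) (N : nat).

Definition zero_below N p : bool := [forall k : 'I_N, p`_k == 0].

Lemma zero_belowP N p : reflect (forall k, (k < N)%N -> p`_k = 0) (zero_below N p).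
Proof.
apply: (iffP forallP) => [zp k lt_kN | zp k]; first exact/eqP/(zp (Ordinal lt_kN)).
exact/eqP/zp.
Qed.

Lemma zero_belowD N p q : zero_below N p -> zero_below N q -> zero_below N (p + q).
Proof.
move=> /zero_belowP zp /zero_belowP zq; apply/zero_belowP => k lt_kN.
by rewrite coefD zp ?zq ?addr0.
Qed.

Lemma zero_belowB N p q : zero_below N p -> zero_below N q -> zero_below N (p - q).
Proof.
move=> /zero_belowP zp /zero_belowP zq; apply/zero_belowP => k lt_kN.
by rewrite coefB zp ?zq ?subr0.
Qed.

Lemma zero_belowMl N p q : zero_below N q -> zero_below N (p * q).
Proof.
move=> /zero_belowP zq; apply/zero_belowP => k lt_kN; rewrite coefM big1 // => i _.
by rewrite zq ?mulr0 // (leq_ltn_trans (leq_subr _ _) lt_kN).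
Qed.

Lemma zero_below_mul1X N p w : zero_below N (p * (1 + 'X * w)) -> zero_below N p.
Proof.
move=> /zero_belowP zpw; apply/zero_belowP.
suff: forall n, (n <= N)%N -> forall k, (k < n)%N -> p`_k = 0 by apply.
elim=> [|n IHn] le_nN k //; rewrite ltnS leq_eqVlt => /predU1P [-> | /(IHn (ltnW le_nN)) //].
have := zpw n le_nN; rewrite mulrDr mulr1 coefD mulrCA coefXM.
case: n IHn le_nN => [|m] IHn le_nN; first by rewrite addr0.
have zp : zero_below m.+1 p by apply/zero_belowP; apply: IHn; apply: ltnW.
have /zero_belowP zwp := zero_belowMl w zp.
by rewrite /= [p * w]mulrC zwp ?addr0.
Qed.

Definition gf_equation (a c : {poly R}) : {poly R} :=
  a - 1 - 'X * (a + (a - 1) * c) - 'X^2 * (a * (a - c)).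

Lemma gf_equation_unique N a a' c :
  zero_below N (gf_equation a c) -> zero_below N (gf_equation a' c) -> zero_below N (a - a').
Proof.
move=> za za'; apply: (@zero_below_mul1X _ _ (- (1 + c) - 'X * (a + a' - c))).
have -> : (a - a') * (1 + 'X * (- (1 + c) - 'X * (a + a' - c))) =
          gf_equation a c - gf_equation a' c by rewrite /gf_equation; ring.
exact: zero_belowB.
Qed.

End TruncatedSeries.

Section GeneratingFunctions.
Variable N : nat.
Implicit Types x y u : pred btree.

Definition gf x : {poly int} := \poly_(i < N) (num_trees x i)%:R.

Lemma gf_eq x y : x =1 y -> gf x = gf y.
Proof. by move=> eq_xy; apply/polyP => k; rewrite !coef_poly (eq_num_trees eq_xy). Qed.

Lemma gf_split x u : gf x = gf (fun t => x t && u t) + gf (fun t => x t && ~~ u t).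
Proof.
apply/polyP => k; rewrite coefD !coef_poly (num_trees_split x u) natrD.
by case: (k < N)%N; rewrite ?addr0.
Qed.

Lemma gf_node_with x y : zero_below N (gf (node_with x y) - 'X * (gf x * gf y)).
Proof.
apply/zero_belowP => k lt_kN; rewrite coefB coefXM coef_poly lt_kN.
case: k lt_kN => [|m] lt_mN; first by rewrite subr0.
rewrite coefM num_trees_node_with natr_sum /=; apply/eqP; rewrite subr_eq0; apply/eqP/eq_bigr => i _.
by rewrite natrM !coef_poly !ifT //; have := ltn_ord i; lia.
Qed.

Lemma gf_root x : zero_below N (gf x - ((x BLeaf)%:R + gf (fun t => x t && isnode t))).
Proof.
apply/zero_belowP => k lt_kN; rewrite coefB coefD coefMn coef1 !coef_poly lt_kN.
case: k lt_kN => [|m] _ /=; first by rewrite /num_trees /=; case: (x BLeaf).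
rewrite mul0rn add0r /num_trees; apply/eqP; rewrite subr_eq0; apply/eqP; congr (_%:R).
by apply: eq_count => -[|l r] //=; rewrite andbT.
Qed.

Lemma gf_isleaf : zero_below N (gf (fun t => ~~ isnode t) - 1).
Proof.
apply/zero_belowP => k lt_kN; rewrite coefB coef1 coef_poly lt_kN.
case: k lt_kN => [|m] _; first by rewrite subrr.
rewrite /num_trees (eq_count (a2 := pred0)) ?count_pred0 ?subrr // => -[|l r] //=.
by rewrite andbF.
Qed.

End GeneratingFunctions.

Lemma gf_avoids N Q u v : (forall L R, pmatch Q (BNode L R) = u L && v R) ->
  zero_below N (gf N (avoids Q) - ((avoids Q BLeaf)%:R +
    'X * (gf N (avoids Q) * gf N (avoids Q) -
          gf N (fun t => avoids Q t && u t) * gf N (fun t => avoids Q t && v t)))).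
Proof.
move=> matchQ; set A := gf N (avoids Q).
have nodes : gf N (fun t => avoids Q t && isnode t) =
    gf N (node_with (avoids Q) (avoids Q)) -
    gf N (node_with (fun t => avoids Q t && u t) (fun t => avoids Q t && v t)).
  rewrite (gf_split _ (node_with (avoids Q) (avoids Q)) (node_with u v)).
  rewrite (@gf_eq _ (fun t => node_with (avoids Q) (avoids Q) t && node_with u v t)
            (node_with (fun t => avoids Q t && u t) (fun t => avoids Q t && v t))).
    rewrite addrAC subrr add0r; apply: gf_eq => -[|L R] /=; first by rewrite andbF.
    by rewrite avoids_node matchQ andbT andbC.
  by case=> //= L R; rewrite andbACA.
have -> : A - ((avoids Q BLeaf)%:R + 'X * (A * A -
    gf N (fun t => avoids Q t && u t) * gf N (fun t => avoids Q t && v t))) =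
  (A - ((avoids Q BLeaf)%:R + gf N (fun t => avoids Q t && isnode t))) +
  (gf N (node_with (avoids Q) (avoids Q)) - 'X * (A * A)) -
  (gf N (node_with (fun t => avoids Q t && u t) (fun t => avoids Q t && v t)) -
   'X * (gf N (fun t => avoids Q t && u t) * gf N (fun t => avoids Q t && v t))).
  by rewrite nodes; ring.
by apply: zero_belowB; [apply: zero_belowD; [apply: gf_root|] |]; apply: gf_node_with.
Qed.

Section WilfPair.
Variables (e : bool) (l r : ptree) (N : nat).
Local Notation P := (PNode e l r).

Definition has_left_node : pred btree := node_with isnode xpredT.
Definition left_occurs : pred btree := node_with (occurs P) xpredT.

Lemma occurs_isnode t : occurs P t -> isnode t.
Proof. by case: t. Qed.

Lemma pmatch_Q132 L R : pmatch (Q132 P) (BNode L R) = occurs P L && has_left_node R.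
Proof. by case: R => [|[|? ?] ?]; rewrite /= ?andbF ?andbT. Qed.

Lemma pmatch_Q213 L R : pmatch (Q213 P) (BNode L R) = isnode L && left_occurs R.
Proof. by case: L => [|? ?]; case: R => [|? ?]; rewrite /= ?andbT. Qed.

Lemma avoids_Q132 t : avoids P t -> avoids (Q132 P) t.
Proof.
apply/contra/occurs_of_pmatch => -[|L R] //; rewrite pmatch_Q132 occurs_node.
by case/andP=> ->; rewrite orbT.
Qed.

Lemma avoids_Q213 t : avoids P t -> avoids (Q213 P) t.
Proof.
apply/contra/occurs_of_pmatch => -[|L R] //; rewrite pmatch_Q213 occurs_node.
case: R => [|RL RR] /andP [_] // /andP [occ_RL _].
by rewrite occurs_node occ_RL !orbT.
Qed.

Lemma gf_avoids_occurs Q : (forall t, avoids P t -> avoids Q t) ->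
  gf N (fun t => avoids Q t && occurs P t) = gf N (avoids Q) - gf N (avoids P).
Proof.
move=> PQ; rewrite (gf_split _ (avoids Q) (occurs P)).
rewrite (@gf_eq _ (fun t => avoids Q t && ~~ occurs P t) (avoids P)) ?addrK // => t.
case/boolP: (occurs P t) => occ; first by rewrite andbF /avoids occ.
by rewrite andbT (PQ t occ); apply/esym.
Qed.

Lemma gf_equation_Q132 : zero_below N (gf_equation (gf N (avoids (Q132 P))) (gf N (avoids P))).
Proof.
set A := gf N (avoids (Q132 P)); set C := gf N (avoids P).
set B := gf N (fun t => avoids (Q132 P) t && has_left_node t).
set K := gf N (fun t => avoids (Q132 P) t && ~~ has_left_node t).
set L := gf N (fun t => ~~ isnode t).
set D := gf N (node_with (fun t => ~~ isnode t) (avoids (Q132 P))).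
have eA := gf_avoids N pmatch_Q132.
rewrite /= gf_avoids_occurs -/A -/C -/B in eA; last exact: avoids_Q132.
have eK : zero_below N (K - (1 + D)).
  rewrite (_ : D = gf N (fun t => (avoids (Q132 P) t && ~~ has_left_node t) && isnode t)).
    by have := gf_root N (fun t => avoids (Q132 P) t && ~~ has_left_node t); rewrite avoids_leaf.
  by apply: gf_eq => -[|[|? ?] R] //=; rewrite ?andbF // !andbT avoids_node avoids_leaf.
have eD := gf_node_with N (fun t => ~~ isnode t) (avoids (Q132 P)); rewrite -/D -/L -/A in eD.
have AE : A = B + K := gf_split N _ has_left_node.
have -> : gf_equation A C = (A - (1 + 'X * (A * A - (A - C) * B))) +
    'X * (A - C) * ((K - (1 + D)) + (D - 'X * (L * A)) + 'X * A * (L - 1)).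
  by rewrite /gf_equation AE; ring.
have eL : zero_below N (L - 1) := gf_isleaf N.
apply: zero_belowD eA (zero_belowMl _ (zero_belowD (zero_belowD eK eD) _)).
exact: zero_belowMl.
Qed.

Lemma gf_equation_Q213 : zero_below N (gf_equation (gf N (avoids (Q213 P))) (gf N (avoids P))).
Proof.
set A := gf N (avoids (Q213 P)); set C := gf N (avoids P).
set H := gf N (fun t => avoids (Q213 P) t && isnode t).
set G := gf N (fun t => avoids (Q213 P) t && left_occurs t).
set M := gf N (fun t => avoids (Q213 P) t && ~~ left_occurs t).
have eA := gf_avoids N pmatch_Q213; rewrite /= -/A -/H -/G in eA.
have eH := gf_root N (avoids (Q213 P)); rewrite avoids_leaf -/A -/H in eH.
have eG := gf_node_with N (fun t => avoids (Q213 P) t && occurs P t)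
                          (fun t => avoids (Q213 P) t && ~~ left_occurs t).
rewrite gf_avoids_occurs -/A -/C -/M in eG; last exact: avoids_Q213.
rewrite (_ : gf N (node_with _ _) = G) in eG; last first.
  apply: gf_eq => -[|L R] //=; rewrite avoids_node pmatch_Q213.
  case/boolP: (occurs P L) => [/occurs_isnode ->|]; rewrite ?andbF ?andbT //=.
  by case: (left_occurs R); rewrite ?andbT ?andbF.
have AE : A = G + M := gf_split N _ left_occurs.
have -> : gf_equation A C =
    (1 + 'X * (A - C)) * (A - (1 + 'X * (A * A - H * G)) + 'X * G * (A - (1 + H))) -
    'X * (A - 1) * (G - 'X * ((A - C) * M)).
  by rewrite /gf_equation AE; ring.
apply: zero_belowB (zero_belowMl _ eG).
exact: zero_belowMl _ (zero_belowD eA (zero_belowMl _ eH)).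
Qed.

End WilfPair.

Lemma num_avoidersE Q n : num_avoiders Q n = num_trees (avoids Q) n.
Proof.
apply: eq_count => t; congr (_ && _).
by apply/asboolP/negP => [|] nQ /contains_occurs.
Qed.

Lemma eq_num_trees_of_gf x y n : (forall N, zero_below N (gf N x - gf N y)) -> num_trees x n = num_trees y n.
Proof.
move=> /(_ n.+1) /zero_belowP /(_ n (ltnSn n)).
by rewrite coefB !coef_poly ltnSn => /eqP; rewrite subr_eq0 eqr_nat => /eqP.
Qed.

Theorem lemma19 (P : ptree) : P <> PLeaf -> wilf_equiv (Q132 P) (Q213 P).
Proof.
case: P => [//|e l r] _ n; rewrite !num_avoidersE.
by apply: eq_num_trees_of_gf => N; apply: gf_equation_unique (gf_equation_Q132 e l r N) (gf_equation_Q213 e l r N).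
Qed.
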